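(* Let $H\in(\tfrac12,1)$, $\beta\in(1-2H,1]$, $\tau=T/M$, $t_i=i\tau$, and fix $m\in\{1,\dots,M\}$. For $u\in[t_i,t_{i+1})$ set $\mathcal S_N(u,t_i):=E_N(t_m-u)-E_N(t_m-t_i)$. Then there is a constant $C$ independent of $N,M,m$ and $x$ such that for all $x\in V$, $$\sum_{i,j=0}^{m-1}\int_{t_j}^{t_{j+1}}\int_{t_i}^{t_{i+1}}\big\langle\mathcal S_N(u,t_i)P_Nx,\;\mathcal S_N(v,t_j)P_Nx\big\rangle\,\phi(u-v)\,\mathrm du\,\mathrm dv\le C\,\tau^{2H+\beta-1}\|A_N^{\frac{\beta-1}{2}}P_Nx\|^2 .$$
   Context: $(V,\langle\cdot,\cdot\rangle,\|\cdot\|)$ is a real separable Hilbert space; $A$ is a linear, densely defined, positive self-adjoint unbounded operator with compact inverse, orthonormal eigenbasis $(e_i)$, $Ae_i=\lambda_ie_i$, $0<\lambda_1\le\lambda_2\le\dots\to\infty$. $P_N$ is the orthogonal projection onto $\mathrm{span}\{e_1,\dots,e_N\}$, $A_N=AP_N$ (with fractional powers taken on $\mathrm{span}\{e_1,\dots,e_N\}$), $E_N(t)=e^{-tA_N}$. $\phi(y)=H(2H-1)|y|^{2H-2}$. *)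

From Stdlib Require Import Reals Lra Lia ClassicalEpsilon.
Open Scope R_scope.

Record Hilbert := {
  V :> Type;
  vzero : V;
  vadd : V -> V -> V;
  vopp : V -> V;
  vscale : R -> V -> V;
  inner : V -> V -> R;
  vadd_assoc : forall x y z, vadd x (vadd y z) = vadd (vadd x y) z;
  vadd_comm : forall x y, vadd x y = vadd y x;
  vadd_0 : forall x, vadd x vzero = x;
  vadd_opp : forall x, vadd x (vopp x) = vzero;
  vscale_assoc : forall a b x, vscale a (vscale b x) = vscale (a * b) x;
  vscale_1 : forall x, vscale 1 x = x;
  vscale_distr_v : forall a x y, vscale a (vadd x y) = vadd (vscale a x) (vscale a y);
  vscale_distr_s : forall a b x, vscale (a + b) x = vadd (vscale a x) (vscale b x);
  inner_sym : forall x y, inner x y = inner y x;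
  inner_add_l : forall x y z, inner (vadd x y) z = inner x z + inner y z;
  inner_scale_l : forall a x y, inner (vscale a x) y = a * inner x y;
  inner_pos : forall x, 0 <= inner x x;
  inner_def : forall x, inner x x = 0 -> x = vzero;
  complete : forall u : nat -> V,
    (forall eps, eps > 0 -> exists N, forall n p, (n >= N)%nat -> (p >= N)%nat ->
        sqrt (inner (vadd (u n) (vopp (u p))) (vadd (u n) (vopp (u p)))) < eps) ->
    exists l, Un_cv (fun n => sqrt (inner (vadd (u n) (vopp l)) (vadd (u n) (vopp l)))) 0
}.

Arguments vzero {h}. Arguments vadd {h}. Arguments vopp {h}.
Arguments vscale {h}. Arguments inner {h}.

Definition vnorm {Vh : Hilbert} (x : Vh) : R := sqrt (inner x x).

Fixpoint vsum {Vh : Hilbert} (f : nat -> Vh) (n : nat) : Vh :=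
  match n with
  | O => vzero
  | S k => vadd (vsum f k) (f k)
  end.

Fixpoint rsum (f : nat -> R) (n : nat) : R :=
  match n with
  | O => 0
  | S k => rsum f k + f k
  end.

(** Spectral data of A: orthonormal eigenbasis e (0-indexed: e 0, e 1, ...)
    which is total in V (hence V separable), with eigenvalues
    0 < lam 0 <= lam 1 <= ... -> +oo.  (A e_k = lam k e_k; A is the
    positive self-adjoint operator with compact inverse determined by these.) *)
Record SpectralData (Vh : Hilbert) := {
  e : nat -> Vh;
  lam : nat -> R;
  e_orthonormal : forall i j, inner (e i) (e j) = if Nat.eq_dec i j then 1 else 0;
  lam_pos : forall i, 0 < lam i;
  lam_mono : forall i j, (i <= j)%nat -> lam i <= lam j;
  lam_unbounded : forall K, exists i, K < lam i;
  e_total : forall x : Vh,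
    Un_cv (fun N => vnorm (vadd x (vopp (vsum (fun k => vscale (inner x (e k)) (e k)) N)))) 0
}.

Arguments e {Vh}. Arguments lam {Vh}.

Definition PN {Vh : Hilbert} (S : SpectralData Vh) (N : nat) (x : Vh) : Vh :=
  vsum (fun k => vscale (inner x (e S k)) (e S k)) N.

(** A_N^s on span{e_0..e_{N-1}} (fractional power via spectral calculus),
    extended by P_N:  A_N^s x = sum_{k<N} lam_k^s <x,e_k> e_k *)
Definition AN_pow {Vh : Hilbert} (S : SpectralData Vh) (N : nat) (s : R) (x : Vh) : Vh :=
  vsum (fun k => vscale (Rpower (lam S k) s * inner x (e S k)) (e S k)) N.

(** E_N(t) = exp(-t A_N), applied to elements of span{e_0..e_{N-1}}:
    E_N(t) y = sum_{k<N} exp(-t lam_k) <y,e_k> e_k  (agrees with e^{-tA_N} on P_N V). *)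
Definition EN {Vh : Hilbert} (S : SpectralData Vh) (N : nat) (t : R) (y : Vh) : Vh :=
  vsum (fun k => vscale (exp (- t * lam S k) * inner y (e S k)) (e S k)) N.

Definition SN {Vh : Hilbert} (S : SpectralData Vh) (N : nat) (tm u s : R) (y : Vh) : Vh :=
  vadd (EN S N (tm - u) y) (vopp (EN S N (tm - s) y)).

(** phi(y) = H(2H-1)|y|^{2H-2} (only used for y <> 0) *)
Definition phi (H y : R) : R := H * (2 * H - 1) * Rpower (Rabs y) (2 * H - 2).

(** Total Riemann integral: RiemannInt if f is Riemann integrable on [a,b], else 0. *)
Definition RInt (f : R -> R) (a b : R) : R :=
  match excluded_middle_informative (inhabited (Riemann_integrable f a b)) with
  | left h => RiemannInt (epsilon h (fun _ => True))
  | right _ => 0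
  end.

Definition cutoff (delta y : R) : R := if Rle_dec delta (Rabs y) then 1 else 0.

(* Expanding in the eigenbasis, the integrand is a sum over the modes [k] of
   [a_k^2 g(u,t_i) g(v,t_j) phi(u-v)] with [a_k = <y,e_k>] and
   [g(u,s) = exp(-l(t_m-u)) - exp(-l(t_m-s))], which satisfies
   [0 <= g(u,t_i) <= min(1, l tau) exp(-l(t_m-u))] for [l = lam_k].
   As [exp(-l(t_m-u)) exp(-l(t_m-v)) <= exp(-l(t_m-v)/2) exp(-l|u-v|/2)], the [u]-integrals
   summed over [i] are at most [int exp(-l|s|/2) |s|^(2H-2) ds ~ l^(1-2H)], and the
   [v]-integral of [exp(-l(t_m-v)/2)] is at most [2/l]. A mode thus contributes
   [~ a_k^2 min(1, l tau)^2 l^(-2H) <= a_k^2 tau^(2H+beta-1) l^(beta-1)], because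
   [min(1,x)^2 <= x^q] for [0 <= q = 2H+beta-1 <= 2].
   The cut-off is absorbed into the continuous majorant [max(|s|,delta)^(2H-2)], whose
   integral bounds do not depend on [delta]; the total integral of the statement is only
   ever compared with integrals of continuous majorants. *)

From Coquelicot Require Import Coquelicot.
From Stdlib Require Import Reals Lra Lia ClassicalEpsilon.
From Pilot Require Import Defs.
Open Scope R_scope.

Lemma rsum_ext (f g : nat -> R) n :
  (forall k, (k < n)%nat -> f k = g k) -> rsum f n = rsum g n.
Proof.
  induction n as [|n IH]; intros Hfg; simpl; [reflexivity|].
  rewrite IH by (intros; apply Hfg; lia). rewrite Hfg by lia. reflexivity.
Qed.

Lemma rsum_0 n : rsum (fun _ => 0) n = 0.
Proof. induction n; simpl; lra. Qed.

Lemma rsum_plus (f g : nat -> R) n : rsum (fun k => f k + g k) n = rsum f n + rsum g n.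
Proof. induction n; simpl; lra. Qed.

Lemma rsum_opp (f : nat -> R) n : rsum (fun k => - f k) n = - rsum f n.
Proof. induction n; simpl; lra. Qed.

Lemma rsum_scal (c : R) (f : nat -> R) n : rsum (fun k => c * f k) n = c * rsum f n.
Proof. induction n; simpl; lra. Qed.

Lemma rsum_le (f g : nat -> R) n :
  (forall k, (k < n)%nat -> f k <= g k) -> rsum f n <= rsum g n.
Proof.
  induction n as [|n IH]; intros Hfg; simpl; [lra|].
  assert (rsum f n <= rsum g n) by (apply IH; intros; apply Hfg; lia).
  specialize (Hfg n ltac:(lia)). lra.
Qed.

Lemma rsum_nonneg (f : nat -> R) n : (forall k, (k < n)%nat -> 0 <= f k) -> 0 <= rsum f n.
Proof. intros Hf. rewrite <- (rsum_0 n). apply rsum_le, Hf. Qed.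

Lemma rsum_swap (f : nat -> nat -> R) n m :
  rsum (fun i => rsum (fun k => f i k) m) n = rsum (fun k => rsum (fun i => f i k) n) m.
Proof.
  induction n as [|n IH]; simpl; [symmetry; apply rsum_0|].
  rewrite IH, <- rsum_plus. reflexivity.
Qed.

(** * Inner products and the eigenbasis *)

Lemma inner_0_l {Vh : Hilbert} (z : Vh) : inner vzero z = 0.
Proof. pose proof (inner_add_l Vh vzero vzero z) as Hadd. rewrite vadd_0 in Hadd. lra. Qed.

Lemma inner_opp_l {Vh : Hilbert} (x z : Vh) : inner (vopp x) z = - inner x z.
Proof.
  pose proof (inner_add_l Vh x (vopp x) z) as Hadd.
  rewrite vadd_opp, inner_0_l in Hadd. lra.
Qed.

Lemma inner_vsum_l {Vh : Hilbert} (f : nat -> Vh) n z :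
  inner (vsum f n) z = rsum (fun k => inner (f k) z) n.
Proof.
  induction n as [|n IH]; simpl; [apply inner_0_l|].
  rewrite inner_add_l, IH. reflexivity.
Qed.

Section Eigenbasis.

Context {Vh : Hilbert} (Sd : SpectralData Vh).

Lemma inner_vsum_basis_e (c : nat -> R) n k :
  inner (vsum (fun l => vscale (c l) (e Sd l)) n) (e Sd k) =
  if Compare_dec.lt_dec k n then c k else 0.
Proof.
  rewrite inner_vsum_l. induction n as [|n IH]; simpl.
  - destruct (Compare_dec.lt_dec k 0); [lia | reflexivity].
  - rewrite IH, inner_scale_l, e_orthonormal.
    destruct (Nat.eq_dec n k); destruct (Compare_dec.lt_dec k n);
      destruct (Compare_dec.lt_dec k (S n)); try lia; try lra; subst; lra.
Qed.

Lemma inner_vsum_basis (b c : nat -> R) n :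
  inner (vsum (fun l => vscale (b l) (e Sd l)) n) (vsum (fun l => vscale (c l) (e Sd l)) n)
  = rsum (fun k => b k * c k) n.
Proof.
  rewrite inner_vsum_l. apply rsum_ext. intros k Hk.
  rewrite inner_scale_l, inner_sym, inner_vsum_basis_e.
  destruct (Compare_dec.lt_dec k n); [reflexivity | lia].
Qed.

Lemma inner_AN_pow N s (y : Vh) :
  inner (AN_pow Sd N s y) (AN_pow Sd N s y) =
  rsum (fun k => Rpower (lam Sd k) s ^ 2 * inner y (e Sd k) ^ 2) N.
Proof.
  unfold AN_pow. rewrite inner_vsum_basis. apply rsum_ext. intros. ring.
Qed.

End Eigenbasis.

Definition mode_gap (l tm u s : R) : R := exp (- (tm - u) * l) - exp (- (tm - s) * l).

Lemma inner_SN {Vh : Hilbert} (Sd : SpectralData Vh) N tm u s v r (y : Vh) :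
  inner (SN Sd N tm u s y) (SN Sd N tm v r y) =
  rsum (fun k => mode_gap (lam Sd k) tm u s * mode_gap (lam Sd k) tm v r
                 * inner y (e Sd k) ^ 2) N.
Proof.
  unfold SN, EN.
  rewrite !inner_add_l, !inner_opp_l, !(inner_sym _ _ (vadd _ _)), !inner_add_l,
    !inner_opp_l, !inner_vsum_basis.
  repeat (rewrite <- rsum_opp || rewrite <- rsum_plus).
  apply rsum_ext. intros. unfold mode_gap. ring.
Qed.

(** * Continuity and integrals of real functions *)

Lemma continuous_R_plus (f g : R -> R) x :
  continuous f x -> continuous g x -> continuous (fun y => f y + g y) x.
Proof. apply (@continuous_plus R_UniformSpace R_AbsRing R_NormedModule). Qed.

Lemma continuous_R_mult (f g : R -> R) x :
  continuous f x -> continuous g x -> continuous (fun y => f y * g y) x.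
Proof. apply (@continuous_mult R_UniformSpace R_AbsRing). Qed.

Lemma continuous_R_opp (f : R -> R) x : continuous f x -> continuous (fun y => - f y) x.
Proof. apply (@continuous_opp R_UniformSpace R_AbsRing R_NormedModule). Qed.

Lemma continuous_R_const (c x : R) : continuous (fun _ => c) x.
Proof. apply (@continuous_const R_UniformSpace R_UniformSpace). Qed.

Lemma continuous_R_id (x : R) : continuous (fun y => y) x.
Proof. apply (@continuous_id R_UniformSpace). Qed.

Lemma continuous_R_comp (f g : R -> R) x :
  continuous f x -> continuous g (f x) -> continuous (fun y => g (f y)) x.
Proof. apply (@continuous_comp R_UniformSpace R_UniformSpace R_UniformSpace). Qed.

Lemma continuous_R_minus (f g : R -> R) x :
  continuous f x -> continuous g x -> continuous (fun y => f y - g y) x.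
Proof. apply (@continuous_minus R_UniformSpace R_AbsRing R_NormedModule). Qed.

Lemma continuous_R_div_const (f : R -> R) c x :
  continuous f x -> continuous (fun y => f y / c) x.
Proof. intros Hf. apply continuous_R_mult; [exact Hf | apply continuous_R_const]. Qed.

Lemma continuous_R_exp (f : R -> R) x : continuous f x -> continuous (fun y => exp (f y)) x.
Proof. intros Hf. apply (continuous_R_comp f exp); [exact Hf | apply continuous_exp]. Qed.

Lemma Rmax_abs_formula a b : Rmax a b = (a + b + Rabs (a - b)) / 2.
Proof. unfold Rmax, Rabs. destruct Rle_dec, Rcase_abs; lra. Qed.

Lemma continuous_R_max (f g : R -> R) x :
  continuous f x -> continuous g x -> continuous (fun y => Rmax (f y) (g y)) x.
Proof.
  intros Hf Hg. apply (continuous_ext (fun y => (f y + g y + Rabs (f y - g y)) / 2)).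
  { intros y. symmetry. apply Rmax_abs_formula. }
  apply continuous_R_div_const, continuous_R_plus;
    [apply continuous_R_plus | apply continuous_Rabs_comp, continuous_R_minus]; assumption.
Qed.

Lemma continuous_R_power (f : R -> R) p x :
  0 < f x -> continuous f x -> continuous (fun y => Rpower (f y) p) x.
Proof.
  intros Hpos Hf. unfold Rpower. apply continuous_R_exp, continuous_R_mult.
  - apply continuous_R_const.
  - apply (continuous_R_comp f ln); [exact Hf | apply continuous_ln, Hpos].
Qed.

Ltac solve_continuous :=
  repeat lazymatch goal with
  | H : continuous ?f ?x |- continuous ?f ?x => exact H
  | |- continuous (fun _ => ?c) _ => apply continuous_R_const
  | |- continuous (fun y => y) _ => apply continuous_R_id
  | |- continuous (fun _ => exp _) _ => apply continuous_R_exp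
  | |- continuous (fun _ => Rabs _) _ => apply continuous_Rabs_comp
  | |- continuous (fun _ => Rmax _ _) _ => apply continuous_R_max
  | |- continuous (fun _ => _ + _) _ => apply continuous_R_plus
  | |- continuous (fun _ => _ - _) _ => apply continuous_R_minus
  | |- continuous (fun _ => _ * _) _ => apply continuous_R_mult
  | |- continuous (fun _ => _ / _) _ => apply continuous_R_div_const
  | |- continuous (fun _ => - _) _ => apply continuous_R_opp
  | |- continuous Rabs _ => apply continuous_Rabs
  | |- continuous (Rmult ?a) _ => apply (continuous_R_mult (fun _ => a) (fun y => y))
  | |- continuous (Rminus ?a) _ => apply (continuous_R_minus (fun _ => a) (fun y => y))
  end.

Lemma continuous_rsum (f : nat -> R -> R) n x :
  (forall k, continuous (f k) x) -> continuous (fun y => rsum (fun k => f k y) n) x.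
Proof.
  intros Hf. induction n; simpl; [apply continuous_R_const | apply continuous_R_plus; auto].
Qed.

(** [RInt] is the total integral of [Defs], [CRInt] the one of Coquelicot. *)
Notation CRInt := Coquelicot.RInt.RInt.

(** Coquelicot states equalities of integrals in the carrier of a normed module;
    this exposes them as equalities in [R] for [ring] and [field]. *)
Ltac real_eq := lazymatch goal with |- @eq _ ?a ?b => change (@eq R a b) end.

Lemma ex_RInt_continuous_R (f : R -> R) a b : (forall x, continuous f x) -> ex_RInt f a b.
Proof. intros Hf. apply (@ex_RInt_continuous R_CompleteNormedModule). intros; apply Hf. Qed.

Lemma CRInt_const (c a b : R) : CRInt (fun _ => c) a b = (b - a) * c.
Proof. apply (RInt_const (V := R_CompleteNormedModule)). Qed.

Lemma CRInt_scal (f : R -> R) c a b :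
  ex_RInt f a b -> CRInt (fun x => c * f x) a b = c * CRInt f a b.
Proof. intros Hf. exact (RInt_scal f a b c Hf). Qed.

Lemma CRInt_Chasles (f : R -> R) a b c :
  ex_RInt f a b -> ex_RInt f b c -> CRInt f a b + CRInt f b c = CRInt f a c.
Proof. intros Hab Hbc. exact (RInt_Chasles f a b c Hab Hbc). Qed.

Lemma ex_RInt_rsum (f : nat -> R -> R) n a b : (forall k, ex_RInt (f k) a b) ->
  ex_RInt (fun x => rsum (fun k => f k x) n) a b.
Proof.
  intros Hf. induction n; simpl.
  - apply (ex_RInt_const (V := R_NormedModule)).
  - apply (ex_RInt_plus (V := R_NormedModule)); auto.
Qed.

Lemma CRInt_rsum (f : nat -> R -> R) n a b : (forall k, ex_RInt (f k) a b) ->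
  CRInt (fun x => rsum (fun k => f k x) n) a b = rsum (fun k => CRInt (f k) a b) n.
Proof.
  intros Hf. induction n as [|n IH]; simpl.
  - rewrite CRInt_const. ring.
  - rewrite <- IH. exact (RInt_plus _ _ a b (ex_RInt_rsum f n a b Hf) (Hf n)).
Qed.

Lemma CRInt_grid (g : R -> R) (t : nat -> R) n : (forall x, continuous g x) ->
  rsum (fun j => CRInt g (t j) (t (S j))) n = CRInt g (t O) (t n).
Proof.
  intros Hg. induction n as [|n IH]; simpl.
  - symmetry. apply (RInt_point (V := R_CompleteNormedModule)).
  - rewrite IH. apply CRInt_Chasles; apply ex_RInt_continuous_R, Hg.
Qed.

(** This holds whether or not [f] is Riemann integrable: if it is not, [RInt f a b] is [0]. *)
Lemma RInt_le_CRInt (f g : R -> R) a b : a <= b -> ex_RInt g a b ->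
  (forall x, a < x < b -> f x <= g x) -> (forall x, a < x < b -> 0 <= g x) ->
  RInt f a b <= CRInt g a b.
Proof.
  intros Hab Hg Hfg Hg0. unfold RInt.
  destruct (excluded_middle_informative _).
  - rewrite (RInt_Reals g a b (ex_RInt_Reals_0 _ _ _ Hg)). apply RiemannInt_P19; auto.
  - apply RInt_ge_0; auto.
Qed.

Lemma CRInt_exp_affine k c a b : k <> 0 ->
  CRInt (fun s => exp (k * s + c)) a b = (exp (k * b + c) - exp (k * a + c)) / k.
Proof.
  intros Hk.
  assert (Hint : is_RInt (fun s => exp (k * s + c)) a b
                   (minus (exp (k * b + c) / k) (exp (k * a + c) / k))).
  { apply (is_RInt_derive (fun s => exp (k * s + c) / k)).
    - intros x _. auto_derive; [trivial | field; exact Hk].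
    - intros x _. solve_continuous. }
  rewrite (is_RInt_unique _ _ _ _ Hint). change (minus ?x ?y) with (x - y).
  real_eq. unfold Rdiv. ring.
Qed.

Lemma CRInt_Rpower p a b : -1 < p -> 0 < a <= b ->
  CRInt (fun s => Rpower s p) a b = (Rpower b (p + 1) - Rpower a (p + 1)) / (p + 1).
Proof.
  intros Hp [Ha Hab].
  assert (Hint : is_RInt (fun s => Rpower s p) a b
                   (minus (Rpower b (p + 1) / (p + 1)) (Rpower a (p + 1) / (p + 1)))).
  { apply (is_RInt_derive (fun s => Rpower s (p + 1) / (p + 1))).
    - intros x Hx. rewrite Rmin_left, Rmax_right in Hx by lra.
      apply is_derive_Reals.
      replace (Rpower x p) with ((p + 1) * Rpower x (p + 1 - 1) / (p + 1))
        by (replace (p + 1 - 1) with p by ring; field; lra).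
      apply derivable_pt_lim_div_scal, derivable_pt_lim_power. lra.
    - intros x Hx. rewrite Rmin_left in Hx by lra.
      apply continuous_R_power; [lra | apply continuous_R_id]. }
  rewrite (is_RInt_unique _ _ _ _ Hint). change (minus ?x ?y) with (x - y).
  real_eq. unfold Rdiv. ring.
Qed.

Lemma exp_le_compat x y : x <= y -> exp x <= exp y.
Proof. intros [Hlt|Heq]; [left; apply exp_increasing, Hlt | right; rewrite Heq; reflexivity]. Qed.

Lemma Rpower_pos a p : 0 < Rpower a p.
Proof. apply exp_pos. Qed.

Lemma Rpower_antitone a b p : p <= 0 -> 0 < a <= b -> Rpower b p <= Rpower a p.
Proof.
  intros Hp [Ha Hab]. apply exp_le_compat.
  pose proof (ln_le a b Ha Hab). nra.
Qed.

Lemma CRInt_exp_affine_le k c a b : k <> 0 -> a <= b ->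
  k * a + c <= 0 -> k * b + c <= 0 -> CRInt (fun s => exp (k * s + c)) a b <= / Rabs k.
Proof.
  intros Hk Hab Ha Hb. rewrite CRInt_exp_affine by exact Hk.
  pose proof (exp_pos (k * a + c)). pose proof (exp_pos (k * b + c)).
  apply exp_le_compat in Ha, Hb. rewrite exp_0 in Ha, Hb.
  unfold Rabs. destruct (Rcase_abs k) as [Hneg|Hpos].
  - replace ((exp (k * b + c) - exp (k * a + c)) / k)
      with ((exp (k * a + c) - exp (k * b + c)) * / - k) by (field; lra).
    assert (0 < / - k) by (apply Rinv_0_lt_compat; lra). nra.
  - assert (0 < / k) by (apply Rinv_0_lt_compat; lra). unfold Rdiv. nra.
Qed.

(** * The damped kernel *)

(** For [p < 0], the continuous majorant of [|s|^p * cutoff d s] that replaces the singular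
    kernel. *)
Definition floored_power (d p s : R) : R := Rpower (Rmax (Rabs s) d) p.

Definition damped_kernel (l d p s : R) : R := exp (- (l * Rabs s) / 2) * floored_power d p s.

Definition damped_kernel_bound (l p : R) : R := Rpower (/ l) (p + 1) * (3 + / (p + 1)).

Section DampedKernel.

Variables (l d p : R).
Hypotheses (Hl : 0 < l) (Hd : 0 < d) (Hp : -1 < p < 0).

Lemma continuous_floored_power s : continuous (floored_power d p) s.
Proof.
  apply continuous_R_power; [pose proof (Rmax_r (Rabs s) d); lra | solve_continuous].
Qed.

Lemma continuous_damped_kernel s : continuous (damped_kernel l d p) s.
Proof. apply continuous_R_mult; [solve_continuous | apply continuous_floored_power]. Qed.

Lemma continuous_damped_kernel_shift v u :
  continuous (fun u => damped_kernel l d p (u - v)) u.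
Proof.
  apply (continuous_R_comp (fun u => u - v)); [solve_continuous | apply continuous_damped_kernel].
Qed.

Lemma ex_RInt_floored_power a b : ex_RInt (floored_power d p) a b.
Proof. apply ex_RInt_continuous_R, continuous_floored_power. Qed.

Lemma ex_RInt_damped_kernel a b : ex_RInt (damped_kernel l d p) a b.
Proof. apply ex_RInt_continuous_R, continuous_damped_kernel. Qed.

Lemma damped_kernel_pos s : 0 < damped_kernel l d p s.
Proof. apply Rmult_lt_0_compat; [apply exp_pos | apply Rpower_pos]. Qed.

Lemma damped_kernel_even s : damped_kernel l d p (- s) = damped_kernel l d p s.
Proof. unfold damped_kernel, floored_power. rewrite Rabs_Ropp. reflexivity. Qed.

Lemma damped_kernel_le_floored_power s : damped_kernel l d p s <= floored_power d p s.
Proof.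
  unfold damped_kernel. pose proof (Rpower_pos (Rmax (Rabs s) d) p).
  assert (exp (- (l * Rabs s) / 2) <= 1).
  { rewrite <- exp_0. apply exp_le_compat. pose proof (Rabs_pos s). nra. }
  unfold floored_power. nra.
Qed.

Lemma CRInt_floored_power_le r : 0 < r ->
  CRInt (floored_power d p) 0 r <= Rpower r (p + 1) * (1 + / (p + 1)).
Proof.
  intros Hr.
  assert (Hq : 0 < / (p + 1)) by (apply Rinv_0_lt_compat; lra).
  assert (Hsucc : forall x, 0 < x -> x * Rpower x p = Rpower x (p + 1))
    by (intros x Hx; rewrite Rpower_plus, Rpower_1 by exact Hx; ring).
  assert (Hflat : forall a b, 0 <= a <= b -> b <= d ->
            CRInt (floored_power d p) a b = (b - a) * Rpower d p).
  { intros a b Hab Hb. rewrite <- CRInt_const. apply RInt_ext. intros x Hx.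
    rewrite Rmin_left, Rmax_right in Hx by lra.
    unfold floored_power. rewrite Rabs_right, Rmax_right by lra. reflexivity. }
  pose proof (Rpower_pos r (p + 1)).
  destruct (Rle_lt_dec r d) as [Hrd|Hdr].
  - rewrite Hflat by lra.
    assert (Rpower d p <= Rpower r p) by (apply Rpower_antitone; lra).
    rewrite <- (Hsucc r Hr) in *. pose proof (Rpower_pos r p). nra.
  - rewrite <- (CRInt_Chasles _ 0 d r) by apply ex_RInt_floored_power.
    rewrite Hflat by lra.
    rewrite (RInt_ext (floored_power d p) (fun s => Rpower s p) d r).
    2:{ intros x Hx. rewrite Rmin_left, Rmax_right in Hx by lra.
        unfold floored_power. rewrite Rabs_right, Rmax_left by lra. reflexivity. }
    rewrite CRInt_Rpower by lra.
    replace ((d - 0) * Rpower d p) with (Rpower d (p + 1)) by (rewrite <- Hsucc; lra).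
    assert (Rpower d (p + 1) <= Rpower r (p + 1)) by (apply Rle_Rpower_l; lra).
    pose proof (Rpower_pos d (p + 1)). unfold Rdiv. nra.
Qed.

Lemma CRInt_damped_kernel_tail_le x : / l <= x ->
  CRInt (damped_kernel l d p) (/ l) x <= 2 * Rpower (/ l) (p + 1).
Proof.
  intros Hx. set (r := / l) in *.
  assert (Hr : 0 < r) by (apply Rinv_0_lt_compat, Hl).
  assert (Hmaj : CRInt (damped_kernel l d p) r x
                 <= CRInt (fun s => Rpower r p * exp (- l / 2 * s + 0)) r x).
  { apply RInt_le; [exact Hx | apply ex_RInt_damped_kernel | |].
    - apply ex_RInt_continuous_R. intros. solve_continuous.
    - intros s Hs. unfold damped_kernel, floored_power.
      rewrite Rabs_right by lra.
      replace (- (l * s) / 2) with (- l / 2 * s + 0) by field.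
      assert (Rpower (Rmax s d) p <= Rpower r p)
        by (apply Rpower_antitone; [lra | pose proof (Rmax_l s d); lra]).
      pose proof (exp_pos (- l / 2 * s + 0)). nra. }
  rewrite CRInt_scal in Hmaj by (apply ex_RInt_continuous_R; intros; solve_continuous).
  assert (Hexp : CRInt (fun s => exp (- l / 2 * s + 0)) r x <= 2 * r).
  { replace (2 * r) with (/ Rabs (- l / 2))
      by (unfold r; rewrite Rabs_left by lra; field; lra).
    apply CRInt_exp_affine_le; nra. }
  replace (2 * Rpower r (p + 1)) with (Rpower r p * (2 * r))
    by (rewrite Rpower_plus, Rpower_1 by exact Hr; ring).
  apply (Rle_trans _ _ _ Hmaj), Rmult_le_compat_l; [left; apply Rpower_pos | exact Hexp].
Qed.

(** Below [1 / l] we drop the damping; above it the floored power is at most [l^(-p)]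
    and the damping integrates to at most [2 / l]. *)
Lemma CRInt_damped_kernel_0_le x : 0 <= x ->
  CRInt (damped_kernel l d p) 0 x <= damped_kernel_bound l p.
Proof.
  intros Hx. unfold damped_kernel_bound. set (r := / l).
  assert (Hr : 0 < r) by (apply Rinv_0_lt_compat, Hl).
  assert (Hq : 0 < / (p + 1)) by (apply Rinv_0_lt_compat; lra).
  pose proof (Rpower_pos r (p + 1)). pose proof (CRInt_floored_power_le r Hr) as Hhead.
  assert (Hdrop : forall b, 0 <= b ->
            CRInt (damped_kernel l d p) 0 b <= CRInt (floored_power d p) 0 b).
  { intros b Hb. apply RInt_le; [exact Hb | apply ex_RInt_damped_kernel
    | apply ex_RInt_floored_power | intros; apply damped_kernel_le_floored_power]. }
  destruct (Rle_lt_dec x r) as [Hxr|Hrx].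
  - assert (0 <= CRInt (floored_power d p) x r).
    { apply RInt_ge_0; [exact Hxr | apply ex_RInt_floored_power
      | intros; left; apply Rpower_pos]. }
    rewrite <- (CRInt_Chasles _ 0 x r) in Hhead by apply ex_RInt_floored_power.
    specialize (Hdrop x Hx). nra.
  - rewrite <- (CRInt_Chasles _ 0 r x) by apply ex_RInt_damped_kernel.
    specialize (Hdrop r (Rlt_le _ _ Hr)).
    pose proof (CRInt_damped_kernel_tail_le x (Rlt_le _ _ Hrx)) as Htail.
    fold r in Htail. nra.
Qed.

Lemma CRInt_damped_kernel_opp a b :
  CRInt (damped_kernel l d p) (- a) (- b) = - CRInt (damped_kernel l d p) a b.
Proof.
  pose proof (RInt_comp_lin (damped_kernel l d p) (-1) 0 a b (ex_RInt_damped_kernel _ _))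
    as Hrefl.
  replace (-1 * a + 0) with (- a) in Hrefl by ring.
  replace (-1 * b + 0) with (- b) in Hrefl by ring.
  rewrite <- Hrefl, <- (RInt_opp (V := R_CompleteNormedModule))
    by apply ex_RInt_damped_kernel.
  apply RInt_ext. intros x _.
  replace (-1 * x + 0) with (- x) by ring. rewrite damped_kernel_even.
  real_eq. change (-1 * damped_kernel l d p x = - damped_kernel l d p x). ring.
Qed.

Lemma CRInt_damped_kernel_shift v a b :
  CRInt (fun u => damped_kernel l d p (u - v)) a b =
  CRInt (damped_kernel l d p) 0 (b - v) - CRInt (damped_kernel l d p) 0 (a - v).
Proof.
  pose proof (RInt_comp_lin (damped_kernel l d p) 1 (- v) a b (ex_RInt_damped_kernel _ _))
    as Hshift.
  replace (1 * a + - v) with (a - v) in Hshift by ring.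
  replace (1 * b + - v) with (b - v) in Hshift by ring.
  rewrite <- (CRInt_Chasles _ 0 (a - v) (b - v)) by apply ex_RInt_damped_kernel.
  replace (CRInt (damped_kernel l d p) (a - v) (b - v))
    with (CRInt (fun u => damped_kernel l d p (u - v)) a b); [lra|].
  rewrite <- Hshift. apply RInt_ext. intros x _.
  replace (1 * x + - v) with (x - v) by ring. symmetry. apply (scal_one (V := R_ModuleSpace)).
Qed.

Lemma CRInt_damped_kernel_shift_le v a : 0 <= v <= a ->
  CRInt (fun u => damped_kernel l d p (u - v)) 0 a <= 2 * damped_kernel_bound l p.
Proof.
  intros Hv. rewrite CRInt_damped_kernel_shift.
  replace (0 - v) with (- v) by ring.
  assert (Hrefl : CRInt (damped_kernel l d p) 0 (- v) = - CRInt (damped_kernel l d p) 0 v)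
    by (rewrite <- CRInt_damped_kernel_opp, Ropp_0; reflexivity).
  pose proof (CRInt_damped_kernel_0_le v ltac:(lra)).
  pose proof (CRInt_damped_kernel_0_le (a - v) ltac:(lra)). lra.
Qed.

Lemma continuous_CRInt_damped_kernel x : continuous (CRInt (damped_kernel l d p) 0) x.
Proof.
  apply (@ex_derive_continuous R_AbsRing R_NormedModule).
  exists (damped_kernel l d p x). apply (is_derive_RInt _ _ 0).
  - apply filter_forall. intros z.
    apply (RInt_correct (V := R_CompleteNormedModule)), ex_RInt_damped_kernel.
  - apply continuous_damped_kernel.
Qed.

Lemma continuous_CRInt_damped_kernel_shift a b v :
  continuous (fun v => CRInt (fun u => damped_kernel l d p (u - v)) a b) v.
Proof.
  apply (continuous_ext (fun v => CRInt (damped_kernel l d p) 0 (b - v)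
                                  - CRInt (damped_kernel l d p) 0 (a - v))).
  { intros w. symmetry. apply CRInt_damped_kernel_shift. }
  apply continuous_R_plus; [|apply continuous_R_opp];
    apply (continuous_R_comp (fun w => _ - w));
    solve_continuous; apply continuous_CRInt_damped_kernel.
Qed.

End DampedKernel.

(** * A single mode *)

Lemma mode_gap_bounds l tau tm s u : 0 < l -> s <= u <= s + tau -> u <= tm ->
  0 <= mode_gap l tm u s <= Rmin 1 (l * tau) * exp (- (tm - u) * l).
Proof.
  intros Hl Hu Htm. unfold mode_gap.
  replace (- (tm - s) * l) with (- (tm - u) * l + - ((u - s) * l)) by ring.
  rewrite exp_plus.
  pose proof (exp_ineq1_le (- ((u - s) * l))).
  assert (exp (- ((u - s) * l)) <= 1) by (rewrite <- exp_0; apply exp_le_compat; nra).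
  set (A := exp (- (tm - u) * l)). set (B := exp (- ((u - s) * l))) in *.
  assert (0 < A) by apply exp_pos. assert (0 < B) by apply exp_pos.
  assert (Hlin : 1 - B <= l * tau) by nra.
  replace (A - A * B) with (A * (1 - B)) by ring.
  unfold Rmin. destruct Rle_dec; split; nra.
Qed.

Lemma exp_split l tm u v : 0 < l -> u <= tm -> v <= tm ->
  exp (- (tm - u) * l) * exp (- (tm - v) * l)
  <= exp (- (l * (tm - v)) / 2) * exp (- (l * Rabs (u - v)) / 2).
Proof.
  intros Hl Hu Hv. rewrite <- !exp_plus. apply exp_le_compat.
  unfold Rabs. destruct Rcase_abs; nra.
Qed.

Lemma phi_cutoff_bounds H d s : 1 / 2 < H < 1 -> 0 < d ->
  0 <= phi H s * cutoff d s <= H * (2 * H - 1) * floored_power d (2 * H - 2) s.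
Proof.
  intros HH Hd. unfold phi, cutoff, floored_power.
  assert (0 < H * (2 * H - 1)) by nra.
  pose proof (Rpower_pos (Rmax (Rabs s) d) (2 * H - 2)).
  destruct (Rle_dec d (Rabs s)); [rewrite Rmax_left by lra|];
    pose proof (Rpower_pos (Rabs s) (2 * H - 2)); nra.
Qed.

(** Half of the decay of both factors is spent on [exp (- l |u - v| / 2)], which makes the
    singular kernel integrable uniformly in the cut-off. *)
Lemma mode_integrand_le H d l tau tm s u r v :
  1 / 2 < H < 1 -> 0 < d -> 0 < l ->
  s <= u <= s + tau -> r <= v <= r + tau -> u <= tm -> v <= tm ->
  mode_gap l tm u s * mode_gap l tm v r * (phi H (u - v) * cutoff d (u - v))
  <= Rmin 1 (l * tau) ^ 2 * (H * (2 * H - 1)) * exp (- (l * (tm - v)) / 2)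
     * damped_kernel l d (2 * H - 2) (u - v).
Proof.
  intros HH Hd Hl Hu Hv Hutm Hvtm.
  pose proof (mode_gap_bounds l tau tm s u Hl Hu Hutm) as Hgu.
  pose proof (mode_gap_bounds l tau tm r v Hl Hv Hvtm) as Hgv.
  pose proof (exp_split l tm u v Hl Hutm Hvtm) as Hsplit.
  pose proof (phi_cutoff_bounds H d (u - v) HH Hd) as Hker.
  set (c := Rmin 1 (l * tau)) in *.
  assert (Hc : 0 <= c) by (unfold c, Rmin; destruct Rle_dec; nra).
  pose proof (exp_pos (- (tm - u) * l)). pose proof (exp_pos (- (tm - v) * l)).
  assert (Hgap : mode_gap l tm u s * mode_gap l tm v r
                 <= c ^ 2 * (exp (- (l * (tm - v)) / 2) * exp (- (l * Rabs (u - v)) / 2))).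
  { apply Rle_trans with ((c * exp (- (tm - u) * l)) * (c * exp (- (tm - v) * l))).
    - apply Rmult_le_compat; lra.
    - replace ((c * exp (- (tm - u) * l)) * (c * exp (- (tm - v) * l)))
        with (c ^ 2 * (exp (- (tm - u) * l) * exp (- (tm - v) * l))) by ring.
      apply Rmult_le_compat_l; [nra | exact Hsplit]. }
  unfold damped_kernel.
  apply Rle_trans with ((c ^ 2 * (exp (- (l * (tm - v)) / 2) * exp (- (l * Rabs (u - v)) / 2)))
                        * (H * (2 * H - 1) * floored_power d (2 * H - 2) (u - v))).
  - apply Rmult_le_compat; [nra | lra | exact Hgap | lra].
  - right. ring.
Qed.

Lemma Rmin_1_sqr_le_Rpower x q : 0 < x -> 0 <= q <= 2 -> Rmin 1 x ^ 2 <= Rpower x q.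
Proof.
  intros Hx Hq. unfold Rmin. destruct (Rle_dec 1 x) as [H1|H1].
  - replace (1 ^ 2) with (exp 0) by (rewrite exp_0; ring).
    apply exp_le_compat. pose proof (ln_le 1 x ltac:(lra) H1). rewrite ln_1 in *. nra.
  - replace (x ^ 2) with (Rpower x (INR 2)) by (rewrite Rpower_pow by exact Hx; reflexivity).
    apply exp_le_compat. simpl INR.
    assert (ln x < 0) by (rewrite <- ln_1; apply ln_increasing; lra). nra.
Qed.

Lemma mode_rate l tau H beta : 0 < l -> 0 < tau -> 1 / 2 < H < 1 -> 1 - 2 * H < beta <= 1 ->
  Rmin 1 (l * tau) ^ 2 * Rpower (/ l) (2 * H - 1) * / l
  <= Rpower tau (2 * H + beta - 1) * Rpower l ((beta - 1) / 2) ^ 2.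
Proof.
  intros Hl Htau HH Hb.
  assert (Hinv : / l = exp (- ln l)) by (rewrite exp_Ropp, exp_ln by exact Hl; reflexivity).
  apply Rle_trans with (Rpower (l * tau) (2 * H + beta - 1) * Rpower (/ l) (2 * H - 1) * / l).
  - apply Rmult_le_compat_r; [left; apply Rinv_0_lt_compat, Hl|].
    apply Rmult_le_compat_r; [left; apply Rpower_pos|].
    apply Rmin_1_sqr_le_Rpower; nra.
  - right. unfold Rpower. rewrite ln_mult, ln_Rinv by (exact Hl || exact Htau).
    rewrite Hinv. simpl. rewrite Rmult_1_r, <- !exp_plus. f_equal. field.
Qed.

(** * Summation over the time grid *)

Definition grid (tau : R) (i : nat) : R := INR i * tau.

Lemma grid_0 tau : grid tau 0 = 0.
Proof. unfold grid. simpl. ring. Qed.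

Lemma grid_S tau i : grid tau (S i) = grid tau i + tau.
Proof. unfold grid. rewrite S_INR. ring. Qed.

Lemma grid_le tau i j : 0 <= tau -> (i <= j)%nat -> grid tau i <= grid tau j.
Proof. intros Htau Hij. apply Rmult_le_compat_r; [exact Htau | apply le_INR, Hij]. Qed.

Section Estimate.

Context {Vh : Hilbert} (Sd : SpectralData Vh).
Variables (H delta tau : R) (N m : nat) (y : Vh).
Hypotheses (HH : 1 / 2 < H < 1) (Hdelta : 0 < delta) (Htau : 0 < tau).

Definition mode_weight (k : nat) : R :=
  inner y (e Sd k) ^ 2 * Rmin 1 (lam Sd k * tau) ^ 2 * (H * (2 * H - 1)).

Definition mode_envelope (k : nat) (v : R) : R :=
  exp (- (lam Sd k * (grid tau m - v)) / 2).

Definition majorant (i : nat) (v : R) : R :=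
  rsum (fun k => mode_weight k * mode_envelope k v
                 * CRInt (fun u => damped_kernel (lam Sd k) delta (2 * H - 2) (u - v))
                         (grid tau i) (grid tau (S i))) N.

Lemma mode_weight_nonneg k : 0 <= mode_weight k.
Proof.
  unfold mode_weight. assert (0 < H * (2 * H - 1)) by nra.
  apply Rmult_le_pos; [apply Rmult_le_pos; apply pow2_ge_0 | lra].
Qed.

Lemma continuous_mode_envelope k v : continuous (mode_envelope k) v.
Proof. unfold mode_envelope. solve_continuous. Qed.

Lemma continuous_majorant i v : continuous (majorant i) v.
Proof.
  apply continuous_rsum. intros k.
  apply continuous_R_mult; [apply continuous_R_mult; [apply continuous_R_const|] |].
  - apply continuous_mode_envelope.
  - apply continuous_CRInt_damped_kernel_shift, Hdelta.
Qed.

Lemma majorant_nonneg i v : 0 <= majorant i v.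
Proof.
  apply rsum_nonneg. intros k _. apply Rmult_le_pos.
  - apply Rmult_le_pos; [apply mode_weight_nonneg | left; apply exp_pos].
  - apply RInt_ge_0; [rewrite grid_S; lra | apply ex_RInt_continuous_R |].
    + intros; apply continuous_damped_kernel_shift, Hdelta.
    + intros; left; apply damped_kernel_pos; exact Hdelta.
Qed.

Lemma integrand_le_mode_sum i j u v :
  (i < m)%nat -> (j < m)%nat ->
  grid tau i <= u <= grid tau (S i) -> grid tau j <= v <= grid tau (S j) ->
  inner (SN Sd N (grid tau m) u (grid tau i) y) (SN Sd N (grid tau m) v (grid tau j) y)
    * phi H (u - v) * cutoff delta (u - v)
  <= rsum (fun k => mode_weight k * mode_envelope k v
                    * damped_kernel (lam Sd k) delta (2 * H - 2) (u - v)) N.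
Proof.
  intros Hi Hj Hu Hv.
  assert (Hti : grid tau (S i) <= grid tau m) by (apply grid_le; [lra | lia]).
  assert (Htj : grid tau (S j) <= grid tau m) by (apply grid_le; [lra | lia]).
  rewrite grid_S in *.
  rewrite inner_SN, Rmult_assoc, Rmult_comm, <- rsum_scal.
  apply rsum_le. intros k _.
  pose proof (mode_integrand_le H delta (lam Sd k) tau (grid tau m) (grid tau i) u
                (grid tau j) v HH Hdelta (lam_pos _ Sd k) Hu Hv ltac:(lra) ltac:(lra)).
  pose proof (pow2_ge_0 (inner y (e Sd k))).
  unfold mode_weight, mode_envelope. nra.
Qed.

Lemma RInt_integrand_le_majorant i j v :
  (i < m)%nat -> (j < m)%nat -> grid tau j <= v <= grid tau (S j) ->
  RInt (fun u => inner (SN Sd N (grid tau m) u (grid tau i) y)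
                       (SN Sd N (grid tau m) v (grid tau j) y)
                 * phi H (u - v) * cutoff delta (u - v))
       (grid tau i) (grid tau (S i))
  <= majorant i v.
Proof.
  intros Hi Hj Hv.
  set (g u := rsum (fun k => mode_weight k * mode_envelope k v
                             * damped_kernel (lam Sd k) delta (2 * H - 2) (u - v)) N).
  assert (Hg : forall u, continuous g u).
  { intros u. apply continuous_rsum. intros k.
    apply continuous_R_mult; [apply continuous_R_const |].
    apply continuous_damped_kernel_shift, Hdelta. }
  replace (majorant i v) with (CRInt g (grid tau i) (grid tau (S i))).
  2:{ unfold g. rewrite CRInt_rsum.
      - apply rsum_ext. intros k _.
        apply CRInt_scal, ex_RInt_continuous_R, continuous_damped_kernel_shift, Hdelta.
      - intros k. apply ex_RInt_continuous_R. intros u.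
        apply continuous_R_mult; [apply continuous_R_const |].
        apply continuous_damped_kernel_shift, Hdelta. }
  apply RInt_le_CRInt; [rewrite grid_S; lra | apply ex_RInt_continuous_R, Hg | |].
  - intros u Hu. apply integrand_le_mode_sum; [exact Hi | exact Hj | lra | exact Hv].
  - intros u _. apply rsum_nonneg. intros k _. apply Rmult_le_pos.
    + apply Rmult_le_pos; [apply mode_weight_nonneg | left; apply exp_pos].
    + left; apply damped_kernel_pos; exact Hdelta.
Qed.

Lemma RInt_RInt_integrand_le_majorant i j : (i < m)%nat -> (j < m)%nat ->
  RInt (fun v =>
    RInt (fun u => inner (SN Sd N (grid tau m) u (grid tau i) y)
                         (SN Sd N (grid tau m) v (grid tau j) y)
                   * phi H (u - v) * cutoff delta (u - v))
         (grid tau i) (grid tau (S i)))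
    (grid tau j) (grid tau (S j))
  <= CRInt (majorant i) (grid tau j) (grid tau (S j)).
Proof.
  intros Hi Hj. apply RInt_le_CRInt.
  - rewrite grid_S. lra.
  - apply ex_RInt_continuous_R, continuous_majorant.
  - intros v Hv. apply RInt_integrand_le_majorant; [exact Hi | exact Hj | lra].
  - intros v _. apply majorant_nonneg.
Qed.

(** Summed over [i], the [u]-integrals of the kernel tile [[0, t_m]]. *)
Lemma rsum_majorant_le v : 0 <= v <= grid tau m ->
  rsum (fun i => majorant i v) m
  <= rsum (fun k => mode_weight k * (2 * damped_kernel_bound (lam Sd k) (2 * H - 2))
                    * mode_envelope k v) N.
Proof.
  intros Hv. unfold majorant. rewrite rsum_swap. apply rsum_le. intros k _.
  rewrite rsum_scal, CRInt_grid, grid_0.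
  - replace (mode_weight k * (2 * damped_kernel_bound (lam Sd k) (2 * H - 2))
             * mode_envelope k v)
      with (mode_weight k * mode_envelope k v
            * (2 * damped_kernel_bound (lam Sd k) (2 * H - 2))) by ring.
    apply Rmult_le_compat_l.
    + apply Rmult_le_pos; [apply mode_weight_nonneg | left; apply exp_pos].
    + apply CRInt_damped_kernel_shift_le; [apply lam_pos | exact Hdelta | lra | exact Hv].
  - intros u. apply continuous_damped_kernel_shift, Hdelta.
Qed.

Lemma CRInt_mode_envelope_le k : CRInt (mode_envelope k) 0 (grid tau m) <= 2 / lam Sd k.
Proof.
  pose proof (lam_pos _ Sd k) as Hl.
  assert (Htm : 0 <= grid tau m) by (rewrite <- (grid_0 tau); apply grid_le; [lra | lia]).
  rewrite (RInt_ext _ (fun v => exp (lam Sd k / 2 * v + - (lam Sd k / 2 * grid tau m)))).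
  2:{ intros v _. unfold mode_envelope. f_equal. field. }
  replace (2 / lam Sd k) with (/ Rabs (lam Sd k / 2))
    by (rewrite Rabs_right by lra; field; lra).
  apply CRInt_exp_affine_le; nra.
Qed.

Lemma double_sum_le :
  rsum (fun i => rsum (fun j =>
    RInt (fun v =>
      RInt (fun u => inner (SN Sd N (grid tau m) u (grid tau i) y)
                           (SN Sd N (grid tau m) v (grid tau j) y)
                     * phi H (u - v) * cutoff delta (u - v))
           (grid tau i) (grid tau (S i)))
      (grid tau j) (grid tau (S j))) m) m
  <= rsum (fun k => mode_weight k * (2 * damped_kernel_bound (lam Sd k) (2 * H - 2))
                    * (2 / lam Sd k)) N.
Proof.
  assert (Htm : 0 <= grid tau m) by (rewrite <- (grid_0 tau); apply grid_le; [lra | lia]).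
  apply Rle_trans
    with (rsum (fun i => rsum (fun j => CRInt (majorant i) (grid tau j) (grid tau (S j))) m) m).
  { apply rsum_le. intros i Hi. apply rsum_le. intros j Hj.
    apply RInt_RInt_integrand_le_majorant; assumption. }
  rewrite (rsum_ext _ (fun i => CRInt (majorant i) 0 (grid tau m)))
    by (intros i _; rewrite CRInt_grid, grid_0; [reflexivity | apply continuous_majorant]).
  rewrite <- CRInt_rsum by (intros i; apply ex_RInt_continuous_R, continuous_majorant).
  apply Rle_trans
    with (CRInt (fun v => rsum (fun k => mode_weight k
                                         * (2 * damped_kernel_bound (lam Sd k) (2 * H - 2))
                                         * mode_envelope k v) N) 0 (grid tau m)).
  { apply RInt_le; [exact Htm | | | intros v Hv; apply rsum_majorant_le; lra];
      apply ex_RInt_continuous_R; intros v; apply continuous_rsum; intros k.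
    - apply continuous_majorant.
    - apply continuous_R_mult; [apply continuous_R_const | apply continuous_mode_envelope]. }
  rewrite CRInt_rsum
    by (intros k; apply ex_RInt_continuous_R; intros v;
        apply continuous_R_mult; [apply continuous_R_const | apply continuous_mode_envelope]).
  apply rsum_le. intros k _.
  rewrite CRInt_scal by (apply ex_RInt_continuous_R, continuous_mode_envelope).
  apply Rmult_le_compat_l; [|apply CRInt_mode_envelope_le].
  apply Rmult_le_pos; [apply mode_weight_nonneg|].
  unfold damped_kernel_bound. pose proof (Rpower_pos (/ lam Sd k) (2 * H - 2 + 1)).
  assert (0 < / (2 * H - 2 + 1)) by (apply Rinv_0_lt_compat; lra). nra.
Qed.

Lemma mode_contribution_le beta k : 1 - 2 * H < beta <= 1 ->
  mode_weight k * (2 * damped_kernel_bound (lam Sd k) (2 * H - 2)) * (2 / lam Sd k)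
  <= H * (2 * H - 1) * 4 * (3 + / (2 * H - 1)) * Rpower tau (2 * H + beta - 1)
     * (Rpower (lam Sd k) ((beta - 1) / 2) ^ 2 * inner y (e Sd k) ^ 2).
Proof.
  intros Hb. pose proof (lam_pos _ Sd k) as Hl.
  pose proof (mode_rate (lam Sd k) tau H beta Hl Htau HH Hb) as Hrate.
  set (C := inner y (e Sd k) ^ 2 * (H * (2 * H - 1)) * 4 * (3 + / (2 * H - 1))).
  assert (HC : 0 <= C).
  { unfold C. assert (0 < / (2 * H - 1)) by (apply Rinv_0_lt_compat; lra).
    pose proof (pow2_ge_0 (inner y (e Sd k))). assert (0 < H * (2 * H - 1)) by nra.
    apply Rmult_le_pos; [apply Rmult_le_pos|]; nra. }
  unfold mode_weight, damped_kernel_bound. replace (2 * H - 2 + 1) with (2 * H - 1) by ring.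
  apply Rle_trans with (C * (Rmin 1 (lam Sd k * tau) ^ 2 * Rpower (/ lam Sd k) (2 * H - 1)
                             * / lam Sd k)); [right; unfold C, Rdiv; ring|].
  apply Rle_trans with (C * (Rpower tau (2 * H + beta - 1)
                             * Rpower (lam Sd k) ((beta - 1) / 2) ^ 2));
    [apply Rmult_le_compat_l; assumption | right; unfold C; ring].
Qed.

End Estimate.

Theorem mainTheorem10 (Vh : Hilbert) (Sd : SpectralData Vh) (H beta T : R) :
  1 / 2 < H < 1 -> 1 - 2 * H < beta <= 1 -> 0 < T ->
  exists C : R,
    forall (N M m : nat) (x : Vh),
      (1 <= m <= M)%nat ->
      let tau := T / INR M in
      let t := fun i : nat => INR i * tau in
      let y := PN Sd N x in
      forall delta : R, 0 < delta ->
        rsum (fun i => rsum (fun j =>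
          RInt (fun v =>
            RInt (fun u =>
              inner (SN Sd N (t m) u (t i) y) (SN Sd N (t m) v (t j) y)
                * phi H (u - v) * cutoff delta (u - v))
              (t i) (t (S i)))
            (t j) (t (S j))) m) m
        <= C * Rpower tau (2 * H + beta - 1)
             * inner (AN_pow Sd N ((beta - 1) / 2) y) (AN_pow Sd N ((beta - 1) / 2) y).
Proof.
  intros HH Hb HT.
  exists (H * (2 * H - 1) * 4 * (3 + / (2 * H - 1))).
  intros N M m x Hm tau t y delta Hdelta.
  assert (Htau : 0 < tau) by (apply Rdiv_lt_0_compat; [exact HT | apply lt_0_INR; lia]).
  eapply Rle_trans; [exact (double_sum_le Sd H delta tau N m y HH Hdelta Htau)|].
  rewrite inner_AN_pow, <- rsum_scal. apply rsum_le. intros k _.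
  apply mode_contribution_le; assumption.
Qed.
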